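(* The time-discrete first order scheme consisting of $$\widehat\rho=\rho^n-\Delta t\nabla\cdot(\rho\mathbf u)^n,\ \widehat{\rho\mathbf u}=(\rho\mathbf u)^n-\Delta t\nabla\cdot(\rho\mathbf u\otimes\mathbf u+p\,\mathrm{Id})^n,\ \widehat{\rho E}=(\rho E)^n-\Delta t\nabla\cdot((\rho E+\Pi)^n\mathbf u^n),$$ $$\rho^{n+1}=\widehat\rho,\qquad (\rho\mathbf u)^{n+1}=\widehat{\rho\mathbf u}-\frac{1-\varepsilon^2}{\varepsilon^2}\Delta t\nabla p^{n+1},$$ and the elliptic pressure equation $$-\frac{(1-\varepsilon^2)^2}{\varepsilon^2}\Delta t^2\nabla\cdot\Big(\frac{(p-p_\infty)^{n+1}}{\widehat\rho}\nabla p^{n+1}\Big)+\frac{p^{n+1}}{\gamma-1}=-\frac{(1-\varepsilon^2)^2}{2\varepsilon^2}\frac{\Delta t^2}{\widehat\rho}\|\nabla p^{n+1}\|^2-(1-\varepsilon^2)\Delta t(p-p_\infty)^{n+1}\nabla\cdot\widehat{\mathbf u}+\frac{\widehat p}{\gamma-1}$$ (with $\widehat{\mathbf u}=\widehat{\rho\mathbf u}/\widehat\rho$, $\widehat p=(\gamma-1)(\widehat{\rho E}-\frac{\varepsilon^2}{2}\widehat\rho\|\widehat{\mathbf u}\|^2)$) is asymptotic preserving in the following sense: the leading order asymptotic expansion of the numerical solution is a consistent approximation of the incompressible Euler equations $$\rho^{(0)}_t+\nabla\cdot(\rho^{(0)}\mathbf u^{(0)})=0,\quad (\rho^{(0)}\mathbf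 u^{(0)})_t+\nabla\cdot(\rho^{(0)}\mathbf u^{(0)}\otimes\mathbf u^{(0)})+\nabla p^{(2)}=0,\quad \nabla\cdot\mathbf u^{(0)}=-\frac{1}{\gamma p^{(0)}}\frac{dp^{(0)}}{dt}.$$
   Context: Nondimensionalised Euler equations in $\mathbb R^d$ with conserved variables $(\rho,\rho\mathbf u,\rho E)$, equation of state $p=(\gamma-1)(\rho E-\frac{\varepsilon^2}{2}\rho\|\mathbf u\|^2)$, $\gamma>1$, reference Mach number $0<\varepsilon\le1$. Auxiliary pressure $\Pi=\varepsilon^2p+(1-\varepsilon^2)p_\infty$ with reference pressure $p_\infty(t)=\inf_{\mathbf x}p(\mathbf x,t)$. The asymptotic analysis expands all variables as $f=f^{(0)}+\varepsilon f^{(1)}+\varepsilon^2f^{(2)}+\mathcal O(\varepsilon^3)$; in the limit system $p^{(0)}=p^{(0)}(t)$ is spatially constant and $p^{(2)}$ is the incompressible pressure. *)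

From HB Require Import structures.
From mathcomp Require Import all_boot all_order all_algebra.
From mathcomp Require Import all_classical all_reals all_analysis.
Set Implicit Arguments. Unset Strict Implicit. Unset Printing Implicit Defensive.
Import Order.TTheory GRing.Theory Num.Theory.
Import numFieldNormedType.Exports.
Local Open Scope classical_set_scope.
Local Open Scope ring_scope.

Section EulerScheme.
Variables (R : realType) (d : nat).
Local Notation V := 'rV[R]_d.

Definition ev (i : 'I_d) : V := delta_mx 0 i.
Definition pd (i : 'I_d) (f : V -> R) (x : V) : R := derive f x (ev i).

Definition C2b (C : R) (f : V -> R) : Prop :=
  forall x, `|f x| <= C /\ differentiable f x /\
    forall i, `|pd i f x| <= C /\ differentiable (pd i f) x /\
      forall j, `|pd j (pd i f) x| <= C.

Definition expands (F : R -> V -> R) (c : nat -> V -> R) : Prop :=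
  (exists C, forall k, (k <= 2)%N -> C2b C (c k)) /\
  exists (r : R -> V -> R) (C : R), forall e, 0 < e <= 1 ->
    C2b C (r e) /\
    forall x, F e x = c 0%N x + e * c 1%N x + e ^+ 2 * c 2%N x + e ^+ 3 * r e x.

Definition pinf (p : V -> R) : R := inf (range p).

Variables (gam dt : R).
(* data at time level n (as functions of eps and x): density, momentum, total energy *)
Variables (rho : R -> V -> R) (m : 'I_d -> R -> V -> R) (E : R -> V -> R).

Definition pres_n (e : R) (x : V) : R :=
  (gam - 1) * (E e x - e ^+ 2 / 2 * (\sum_(i < d) (m i e x) ^+ 2) / rho e x).
Definition vel (i : 'I_d) (e : R) (x : V) : R := m i e x / rho e x.
Definition Pi_n (e : R) (x : V) : R :=
  e ^+ 2 * pres_n e x + (1 - e ^+ 2) * pinf (pres_n e).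

Definition rhohat (e : R) (x : V) : R :=
  rho e x - dt * \sum_(i < d) pd i (m i e) x.
Definition mhat (i : 'I_d) (e : R) (x : V) : R :=
  m i e x - dt * \sum_(j < d)
     pd j (fun y => m i e y * vel j e y + (if i == j then pres_n e y else 0)) x.
Definition Ehat (e : R) (x : V) : R :=
  E e x - dt * \sum_(j < d) pd j (fun y => (E e y + Pi_n e y) * vel j e y) x.
Definition uhat (i : 'I_d) (e : R) (x : V) : R := mhat i e x / rhohat e x.
Definition phat (e : R) (x : V) : R :=
  (gam - 1) * (Ehat e x - e ^+ 2 / 2 * rhohat e x * \sum_(i < d) (uhat i e x) ^+ 2).

Definition scheme (rho1 : R -> V -> R) (m1 : 'I_d -> R -> V -> R)
    (p1 : R -> V -> R) (e : R) : Prop :=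
  forall x,
  rho1 e x = rhohat e x /\
  (forall i, m1 i e x = mhat i e x - (1 - e ^+ 2) / e ^+ 2 * dt * pd i (p1 e) x) /\
  - ((1 - e ^+ 2) ^+ 2 / e ^+ 2) * dt ^+ 2 *
      \sum_(i < d) pd i (fun y => (p1 e y - pinf (p1 e)) / rhohat e y * pd i (p1 e) y) x
    + p1 e x / (gam - 1)
  = - ((1 - e ^+ 2) ^+ 2 / (2 * e ^+ 2)) * (dt ^+ 2 / rhohat e x)
        * \sum_(i < d) (pd i (p1 e) x) ^+ 2
    - (1 - e ^+ 2) * dt * (p1 e x - pinf (p1 e)) * \sum_(i < d) pd i (uhat i e) x
    + phat e x / (gam - 1).

End EulerScheme.

(* As e -> 0 every unknown of the scheme converges at each point together with its
   first partial derivatives, so each equation of the scheme passes to the limit once its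
   negative powers of e are compensated.  The momentum update subtracts
   (1 - e^2)/e^2 dt grad p^{n+1} while both momenta stay bounded; hence the O(1) and O(e)
   parts of grad p^{n+1} vanish, p^(0) and p^(1) are spatially constant, and
   grad p^{n+1} = e^2 grad p^(2) + O(e^3).  This compensates the e^{-2} in the momentum
   update, which produces the pressure gradient grad p^(2) of the limit, and in the
   elliptic pressure equation, which reduces to p^(0),n+1 / (gam - 1) = Ehat^(0).  As the
   data at level n are well prepared, E^(0) = P0 / (gam - 1) and Pi^n -> P0, so Ehat^(0)
   contains dt div (gam P0 u^(0) / (gam - 1)): this is the divergence constraint. *)

From mathcomp Require Import all_boot all_order all_algebra.
From mathcomp Require Import all_classical all_reals all_analysis.
From mathcomp Require Import ring lra.
Import Order.TTheory GRing.Theory Num.Theory.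
Import numFieldNormedType.Exports.
Local Open Scope classical_set_scope.
Local Open Scope ring_scope.

Section LimitsAtZeroRight.
Context {R : realType}.

Lemma nbhs_right0_le1 : \forall e \near (0 : R)^'+, 0 < e <= 1.
Proof.
near=> e; apply/andP; split; near: e; [exact: nbhs_right_gt | exact: nbhs_right_le].
Unshelve. all: by end_near. Qed.

Lemma nbhs_right0_lt1 : \forall e \near (0 : R)^'+, 0 < e < 1.
Proof.
near=> e; apply/andP; split; near: e; [exact: nbhs_right_gt | exact: nbhs_right_lt].
Unshelve. all: by end_near. Qed.

Lemma cvg_at_right0_id : e @[e --> (0 : R)^'+] --> 0.
Proof. exact/cvg_at_right_filter/cvg_id. Qed.

Lemma cvg0M_bounded {T : Type} {F : set_system T} {FF : Filter F}
    {f g : T -> R} {C : R} :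
  f @ F --> 0 -> (\forall t \near F, `|g t| <= C) -> f t * g t @[t --> F] --> 0.
Proof.
move=> f0 gC; apply/cvgr0Pnorm_le => eps eps0.
have C0 : 0 < `|C| + 1 by rewrite ltr_pwDr ?normr_ge0.
near=> t; rewrite normrM.
have ft : `|f t| <= eps / (`|C| + 1) by near: t; apply: cvgr0_norm_le; rewrite ?divr_gt0.
have gt : `|g t| <= `|C| + 1.
  apply: le_trans (_ : C <= _); first by near: t.
  by apply: le_trans (ler_norm C) _; rewrite lerDl.
apply: le_trans (_ : eps / (`|C| + 1) * (`|C| + 1) <= _).
  by apply: ler_pM.
by rewrite divfK ?gt_eqF.
Unshelve. all: by end_near. Qed.

Lemma cvg_at_right0_exprn k : (0 < k)%N -> e ^+ k @[e --> (0 : R)^'+] --> 0.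
Proof.
by move=> k0; have := cvg_at_right_filter (@exprn_continuous R k 0); rewrite expr0n gtn_eqF.
Qed.

Lemma cvg_sum {T : Type} {F : set_system T} {FF : Filter F} n
    (f : 'I_n -> T -> R) (a : 'I_n -> R) :
  (forall i, f i t @[t --> F] --> a i) ->
  \sum_(i < n) f i t @[t --> F] --> \sum_(i < n) a i.
Proof. by move=> fa; apply: cvg_big => //; exact: add_continuous. Qed.

Lemma cvg_affine_div_sqr_eq0 (a0 a1 l : R) :
  (a0 + e * a1) / e ^+ 2 @[e --> 0^'+] --> l -> a0 = 0 /\ a1 = 0.
Proof.
move=> ql.
have e0 : \forall e \near (0 : R)^'+, e != 0.
  by apply: filterS nbhs_right0_le1 => e /andP[e_gt0 _]; rewrite gt_eqF.
have lin0 : a0 + e * a1 @[e --> 0^'+] --> 0.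
  have e2q : e ^+ 2 * ((a0 + e * a1) / e ^+ 2) @[e --> 0^'+] --> 0 * l.
    exact: cvgM (cvg_at_right0_exprn 2 isT) ql.
  rewrite mul0r in e2q; apply: cvg_trans e2q.
  by apply: near_eq_cvg; apply: filterS e0 => e e_neq0 /=; rewrite mulrC divfK // expf_neq0.
have a00 : a0 = 0.
  have lin : a0 + e * a1 @[e --> 0^'+] --> a0 + 0 * a1.
    exact: cvgD (cvg_cst a0) (cvgM cvg_at_right0_id (cvg_cst a1)).
  rewrite mul0r addr0 in lin; exact: cvg_unique lin lin0.
split => //; rewrite a00 in ql.
have a1_0 : a1 @[_ --> (0 : R)^'+] --> 0.
  have h : e * ((0 + e * a1) / e ^+ 2) @[e --> 0^'+] --> 0 * l by exact: cvgM cvg_at_right0_id ql.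
  rewrite mul0r in h; apply: cvg_trans h.
  by apply: near_eq_cvg; apply: filterS e0 => e e_neq0 /=; field.
exact: cvg_unique (cvg_cst a1) a1_0.
Unshelve. all: by end_near. Qed.

Lemma cvg_unique_near_eq {f g : R -> R} {a b : R} : (\forall e \near (0 : R)^'+, f e = g e) ->
  f e @[e --> 0^'+] --> a -> g e @[e --> 0^'+] --> b -> a = b.
Proof.
move=> fg fa gb; suff fb : f e @[e --> 0^'+] --> b by exact: cvg_unique fa fb.
by apply: cvg_trans gb; apply: near_eq_cvg; apply: filterS fg.
Qed.

Lemma cvgD_sqrM {f z : R -> R} {l : R} : f e @[e --> 0^'+] --> l -> cvg (z e @[e --> 0^'+]) ->
  f e + e ^+ 2 * z e @[e --> 0^'+] --> l.
Proof.
move=> fl /cvg_ex[/= a za].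
have h : f e + e ^+ 2 * z e @[e --> 0^'+] --> l + 0 * a.
  exact: cvgD fl (cvgM (cvg_at_right0_exprn 2 isT) za).
by rewrite mul0r addr0 in h.
Qed.

Lemma cvg_sqr {T : Type} {F : set_system T} {FF : Filter F} {f : T -> R} {a : R} :
  f t @[t --> F] --> a -> f t ^+ 2 @[t --> F] --> a ^+ 2.
Proof. by move=> fa; rewrite expr2; under eq_cvg do rewrite expr2; exact: cvgM. Qed.

Lemma cvg_at_right0_oneBsqr : 1 - e ^+ 2 @[e --> (0 : R)^'+] --> (1 : R).
Proof.
have h : 1 - e ^+ 2 @[e --> (0 : R)^'+] --> (1 - 0 : R).
  by apply: cvgB; [exact: cvg_cst | exact: cvg_at_right0_exprn].
by rewrite subr0 in h.
Qed.

End LimitsAtZeroRight.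

Section PartialDerivatives.
Context {R : realType} {d : nat}.
Local Notation V := 'rV[R]_d.
Implicit Types (f g : V -> R) (x : V).

Lemma pd_cst (k : R) i x : pd i (fun _ : V => k) x = 0.
Proof. exact: derive_cst. Qed.

Lemma pdD f g i x : differentiable f x -> differentiable g x ->
  pd i (fun y => f y + g y) x = pd i f x + pd i g x.
Proof. by move=> /diff_derivable df /diff_derivable dg; exact: deriveD. Qed.

Lemma pdM f g i x : differentiable f x -> differentiable g x ->
  pd i (fun y => f y * g y) x = f x * pd i g x + g x * pd i f x.
Proof. by move=> /diff_derivable df /diff_derivable dg; exact: deriveM. Qed.

Lemma pdV f i x : differentiable f x -> f x != 0 ->
  pd i (fun y => (f y)^-1) x = - (f x) ^- 2 * pd i f x.
Proof. by move=> /diff_derivable df fx0; exact: deriveV. Qed.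

Lemma pdMl (k : R) f i x : differentiable f x ->
  pd i (fun y => k * f y) x = k * pd i f x.
Proof. by move=> /diff_derivable df; exact: deriveMl. Qed.

Lemma differentiableDMl (a : R) {f g x} : differentiable f x -> differentiable g x ->
  differentiable (fun y => f y + a * g y) x.
Proof.
move=> df dg; apply: differentiableD => //.
by apply: differentiableM => //; exact: differentiable_cst.
Qed.

Lemma pdDMl (a : R) f g i x : differentiable f x -> differentiable g x ->
  pd i (fun y => f y + a * g y) x = pd i f x + a * pd i g x.
Proof.
move=> df dg; rewrite pdD ?pdMl //.
by apply: differentiableM => //; exact: differentiable_cst.
Qed.

Lemma pdDr (k : R) f i x : differentiable f x ->
  pd i (fun y => f y + k) x = pd i f x.
Proof. by move=> df; rewrite pdD // pd_cst addr0. Qed.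

Lemma derive_pd0 f x (v : V) : differentiable f x -> (forall i, pd i f x = 0) ->
  derive f x v = 0.
Proof.
move=> df pd0; rewrite deriveE // [v]row_sum_delta linear_sum big1 // => j _.
by rewrite linearZ /= -deriveE // -[derive _ _ _]/(pd j f x) pd0 scaler0.
Qed.

Lemma pd0_constant f : (forall x, differentiable f x) -> (forall i x, pd i f x = 0) ->
  forall x, f x = f 0.
Proof.
move=> df pd0 x; pose g t := f (t *: x).
have quotE (t : R) : (fun h : R => h^-1 *: ((g \o shift t) (h *: 1) - g t)) =
               (fun h : R => h^-1 *: ((f \o shift (t *: x)) (h *: x) - f (t *: x))).
  by apply/funext => h /=; rewrite /g scalerDl [h *: 1]mulr1.
have dg (t : R) : is_derive t (1 : R) g 0.
  have der : derivable g t 1 by rewrite /derivable quotE; exact: diff_derivable.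
  by apply: DeriveDef => //; rewrite /derive quotE; exact: derive_pd0.
have cg : {within `[0, 1], continuous g}%classic.
  apply: continuous_subspaceT => t.
  by apply/differentiable_continuous/(derivable1_diffP g t).1; case: (dg t).
have [c _] := MVT_segment ler01 (fun t _ => dg t) cg.
by rewrite mul0r /g scale1r scale0r => /eqP; rewrite subr_eq0 => /eqP.
Qed.

End PartialDerivatives.

Section ReferencePressure.
Context {R : realType} {d : nat}.
Local Notation V := 'rV[R]_d.
Implicit Types (f g : V -> R) (a b k : R).

Lemma pinf_le {f} y : has_lbound (range f) -> pinf f <= f y.
Proof. by move=> lbf; apply: ge_inf => //; exists y. Qed.

Lemma le_pinf {f a} : (forall y, a <= f y) -> a <= pinf f.
Proof. by move=> af; apply: lb_le_inf; [exists (f 0), 0 | move=> _ [y _ <-]]. Qed.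

Lemma pinf_cst a : pinf (fun _ : V => a) = a.
Proof.
apply/le_anti; rewrite le_pinf // andbT.
by apply: (pinf_le (f := fun _ => a) 0); exists a => _ [y _ <-].
Qed.

Lemma pinf_dist_le f g b : has_lbound (range g) ->
  (forall y, `|f y - g y| <= b) -> `|pinf f - pinf g| <= b.
Proof.
move=> lbg fg.
have gf y : pinf g - b <= f y.
  by have := pinf_le y lbg; have := fg y; rewrite ler_norml; lra.
have lbf : has_lbound (range f) by exists (pinf g - b) => _ [y _ <-].
have fg' y : pinf f - b <= g y.
  by have := pinf_le y lbf; have := fg y; rewrite ler_norml; lra.
have := le_pinf gf; have := le_pinf fg'; rewrite ler_norml; lra.
Qed.

Lemma pinf_affine a k g : 0 < k -> has_lbound (range g) ->
  pinf (fun y => a + k * g y) = a + k * pinf g.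
Proof.
move=> k0 lbg; apply/le_anti/andP; split; last first.
  by apply: le_pinf => y; rewrite lerD2l ler_pM2l // pinf_le.
have lbf : has_lbound (range (fun y => a + k * g y)).
  by exists (a + k * pinf g) => _ [y _ <-]; rewrite lerD2l ler_pM2l // pinf_le.
rewrite -lerBlDl -ler_pdivrMl //; apply: le_pinf => y.
by rewrite ler_pdivrMl // lerBlDl pinf_le.
Qed.

Lemma pinf_cvg (F : R -> V -> R) g (K : R) :
  has_lbound (range g) ->
  (\forall e \near 0^'+, forall y, `|F e y - g y| <= e * K) ->
  pinf (F e) @[e --> 0^'+] --> pinf g.
Proof.
move=> lbg FgK.
have quot_bnd : \forall e \near 0^'+, `|(pinf (F e) - pinf g) / e| <= K.
  apply: filterS2 FgK nbhs_right0_le1 => e FgKe /andP[e0 _].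
  by rewrite normrM normfV (gtr0_norm e0) ler_pdivrMr // mulrC; exact: pinf_dist_le.
have diff0 : pinf (F e) - pinf g @[e --> 0^'+] --> 0.
  apply: cvg_trans (cvg0M_bounded cvg_at_right0_id quot_bnd).
  apply: near_eq_cvg; apply: filterS nbhs_right0_le1 => e /andP[e0 _] /=.
  by rewrite mulrC divfK ?gt_eqF.
have sum : pinf g + (pinf (F e) - pinf g) @[e --> 0^'+] --> pinf g + 0.
  exact: cvgD (cvg_cst _) diff0.
by move: sum; rewrite addr0; under eq_cvg do rewrite subrKC.
Qed.

End ReferencePressure.

Definition boundedC1 {R : realType} {d : nat} (x : 'rV[R]_d) (C : R) (f : 'rV[R]_d -> R) :=
  [/\ differentiable f x, `|f x| <= C & forall i, `|pd i f x| <= C].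

Definition cvgC1 {R : realType} {d : nat} (x : 'rV[R]_d) (F : R -> 'rV[R]_d -> R)
    (g : 'rV[R]_d -> R) :=
  [/\ \forall e \near 0^'+, differentiable (F e) x, differentiable g x,
      F e x @[e --> 0^'+] --> g x &
      forall i, pd i (F e) x @[e --> 0^'+] --> pd i g x].

Section FamilyLimits.
Context {R : realType} {d : nat} {x : 'rV[R]_d}.
Local Notation V := 'rV[R]_d.
Local Notation boundedC1 := (boundedC1 x).
Local Notation cvgC1 := (cvgC1 x).
Implicit Types (F G : R -> V -> R) (f g : V -> R) (C : R).

Lemma cvgC1_cvg {F g} : cvgC1 F g -> F e x @[e --> 0^'+] --> g x.
Proof. by case. Qed.

Lemma cvgC1_cvg_pd {F g} i : cvgC1 F g -> pd i (F e) x @[e --> 0^'+] --> pd i g x.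
Proof. by case=> _ _ _; apply. Qed.

Lemma C2b_boundedC1 {C f} : C2b C f -> boundedC1 C f.
Proof. by move=> /(_ x) [fC [df pdC]]; split => // i; case: (pdC i). Qed.

Lemma C2b_boundedC1_pd {C f} i : C2b C f -> boundedC1 C (pd i f).
Proof. by move=> /(_ x) [_ [_ /(_ i) [pdC [dpd pd2C]]]]. Qed.

Lemma cvgC1_near_eq {F G g} : (\forall e \near 0^'+, F e = G e) -> cvgC1 G g -> cvgC1 F g.
Proof.
move=> FG [dG dg Gg pdG]; split => //.
- by apply: filterS2 FG dG => e ->.
- by apply: cvg_trans Gg; apply: near_eq_cvg; apply: filterS FG => e ->.
- by move=> i; apply: cvg_trans (pdG i); apply: near_eq_cvg; apply: filterS FG => e ->.
Qed.

Lemma cvgC1_eq {F g h} : g =1 h -> cvgC1 F g -> cvgC1 F h.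
Proof. by move=> /funext <-. Qed.

Lemma cvgC1_cst {g} : differentiable g x -> cvgC1 (fun _ => g) g.
Proof. by split => [|||i]; [exact: nearW | | exact: cvg_cst | exact: cvg_cst]. Qed.

Lemma cvgC1_scalar {k : R -> R} {a} :
  k e @[e --> 0^'+] --> a -> cvgC1 (fun e _ => k e) (fun _ => a).
Proof.
split => [|||i].
- by apply: nearW => e; exact: differentiable_cst.
- exact: differentiable_cst.
- by [].
- by rewrite pd_cst; under eq_cvg do rewrite pd_cst; exact: cvg_cst.
Qed.

Lemma cvgC1D {F G f g} : cvgC1 F f -> cvgC1 G g ->
  cvgC1 (fun e y => F e y + G e y) (fun y => f y + g y).
Proof.
move=> [dF df Ff pdF] [dG dg Gg pdG]; split.
- by apply: filterS2 dF dG => e; exact: differentiableD.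
- exact: differentiableD.
- exact: cvgD.
move=> i; rewrite pdD //; apply: cvg_trans (cvgD (pdF i) (pdG i)).
by apply: near_eq_cvg; apply: filterS2 dF dG => e dFe dGe; rewrite pdD.
Qed.

Lemma cvgC1M {F G f g} : cvgC1 F f -> cvgC1 G g ->
  cvgC1 (fun e y => F e y * G e y) (fun y => f y * g y).
Proof.
move=> [dF df Ff pdF] [dG dg Gg pdG]; split.
- by apply: filterS2 dF dG => e; exact: differentiableM.
- exact: differentiableM.
- exact: cvgM.
move=> i; rewrite pdM //.
apply: cvg_trans (cvgD (cvgM Ff (pdG i)) (cvgM Gg (pdF i))).
by apply: near_eq_cvg; apply: filterS2 dF dG => e dFe dGe; rewrite pdM.
Qed.

Lemma cvgC1V {F g} : g x != 0 -> cvgC1 F g -> cvgC1 (fun e y => (F e y)^-1) (fun y => (g y)^-1).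
Proof.
move=> gx0 [dF dg Fg pdF].
have F0 : \forall e \near 0^'+, F e x != 0 by exact: cvgr_neq0 Fg gx0.
split.
- by apply: filterS2 dF F0 => e; exact: differentiableV.
- exact: differentiableV.
- exact: cvgV.
move=> i; rewrite pdV //.
have Fg2 : (F e x ^+ 2)^-1 @[e --> 0^'+] --> (g x ^+ 2)^-1.
  by apply: cvgV; [rewrite sqrf_eq0 | exact: cvg_sqr].
apply: cvg_trans (cvgM (cvgN Fg2) (pdF i)).
by apply: near_eq_cvg; apply: filterS2 dF F0 => e dFe Fe0; rewrite pdV.
Qed.

Lemma cvgC1_mul0 {s : R -> R} {F C} : s e @[e --> 0^'+] --> 0 ->
  (\forall e \near 0^'+, boundedC1 C (F e)) ->
  cvgC1 (fun e y => s e * F e y) (fun _ => 0).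
Proof.
move=> s0 FC; split.
- by apply: filterS FC => e [dFe _ _]; apply: differentiableM => //; exact: differentiable_cst.
- exact: differentiable_cst.
- have FxC : \forall e \near 0^'+, `|F e x| <= C by apply: filterS FC => e [].
  exact: cvg0M_bounded s0 FxC.
move=> i; rewrite pd_cst.
have pdFC : \forall e \near 0^'+, `|pd i (F e) x| <= C.
  by apply: filterS FC => e [_ _ /(_ i)].
apply: cvg_trans (cvg0M_bounded s0 pdFC).
by apply: near_eq_cvg; apply: filterS FC => e [dFe _ _]; rewrite pdMl.
Qed.

End FamilyLimits.

Section Expansions.
Context {R : realType} {d : nat}.
Local Notation V := 'rV[R]_d.
Implicit Types (F : R -> V -> R) (c : nat -> V -> R).

Lemma expands_cvgC1 {F c} x : expands F c -> cvgC1 x F (c 0%N).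
Proof.
move=> [[C cC] [r [Cr Fr]]].
have Fexp : \forall e \near 0^'+, F e =
    fun y => c 0%N y + e * c 1%N y + e ^+ 2 * c 2%N y + e ^+ 3 * r e y.
  by apply: filterS nbhs_right0_le1 => e e01; apply/funext => y; rewrite (Fr e e01).2.
apply: (cvgC1_near_eq Fexp).
apply: (cvgC1_eq (g := fun y => c 0%N y + 0 + 0 + 0)) => [y|]; first by rewrite !addr0.
have cbnd k : (k <= 2)%N -> \forall e \near (0 : R)^'+, boundedC1 x C (c k).
  by move=> k2; apply: nearW => _; exact: C2b_boundedC1 (cC k k2).
apply: cvgC1D; first apply: cvgC1D; first apply: cvgC1D.
- by apply: cvgC1_cst; have [] := C2b_boundedC1 (x := x) (cC 0%N isT).
- exact: (cvgC1_mul0 cvg_at_right0_id (cbnd 1%N isT)).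
- exact: (cvgC1_mul0 (cvg_at_right0_exprn 2 isT) (cbnd 2%N isT)).
- apply: (cvgC1_mul0 (cvg_at_right0_exprn 3 isT)).
  by apply: filterS nbhs_right0_le1 => e e01; exact: C2b_boundedC1 (Fr e e01).1.
Qed.

Lemma expands_uniform {F c} : expands F c ->
  exists K, forall e, 0 < e <= 1 -> forall y, `|F e y - c 0%N y| <= e * K.
Proof.
move=> [[C cC] [r [Cr Fr]]]; exists (C + C + Cr) => e /[dup] e01 /andP[e0 e1] y.
have [cb1 _] := cC 1%N isT y; have [cb2 _] := cC 2%N isT y.
have [rb _] := (Fr e e01).1 y.
rewrite (Fr e e01).2 (_ : _ - c 0%N y = e * (c 1%N y + e * c 2%N y + e ^+ 2 * r e y)); last by ring.
rewrite normrM gtr0_norm // ler_pM2l //.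
have e2 : e ^+ 2 <= 1 by rewrite expr_le1 // ltW.
apply: le_trans (ler_normD _ _) _; apply: lerD; last first.
  rewrite normrM ger0_norm ?exprn_ge0 ?(ltW e0) //.
  exact: le_trans (ler_piMl (normr_ge0 _) e2) rb.
apply: le_trans (ler_normD _ _) _; apply: lerD => //.
by rewrite normrM gtr0_norm //; apply: le_trans (ler_piMl (normr_ge0 _) e1) cb2.
Qed.

End Expansions.

Section IncompressibleLimit.
Context {R : realType} {d : nat} {gam dt : R}.
Local Notation V := 'rV[R]_d.
Context {rho : R -> V -> R} {m : 'I_d -> R -> V -> R} {E : R -> V -> R}
  {rho1 : R -> V -> R} {m1 : 'I_d -> R -> V -> R} {p1 : R -> V -> R}
  {rc : nat -> V -> R} {mc : 'I_d -> nat -> V -> R} {Ec pnc : nat -> V -> R}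
  {r1c : nat -> V -> R} {m1c : 'I_d -> nat -> V -> R} {pc : nat -> V -> R}
  {rp : R -> V -> R} {P0 c Cp Cr : R}.
Hypotheses (gam_gt1 : 1 < gam) (dt_gt0 : 0 < dt) (c_gt0 : 0 < c).
Hypothesis dens_ge : forall e x, 0 < e <= 1 -> c <= rho e x /\ c <= rho1 e x.
Hypothesis scheme_eps : forall e, 0 < e <= 1 -> scheme gam dt rho m E rho1 m1 p1 e.
Hypotheses (rho_exp : expands rho rc) (m_exp : forall i, expands (m i) (mc i))
  (E_exp : expands E Ec) (pres_exp : expands (pres_n gam rho m E) pnc)
  (rho1_exp : expands rho1 r1c) (m1_exp : forall i, expands (m1 i) (m1c i)).
Hypothesis pc_C2b : forall k, (k <= 2)%N -> C2b Cp (pc k).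
Hypothesis p1_exp : forall e, 0 < e <= 1 -> C2b Cr (rp e) /\
  forall x, p1 e x = pc 0%N x + e * pc 1%N x + e ^+ 2 * pc 2%N x + e ^+ 3 * rp e x.
Hypothesis pnc0 : forall x, pnc 0%N x = P0.

Local Notation u0 j := (fun y => mc j 0%N y / rc 0%N y).
Local Notation Q0 := (pc 0%N 0).
Local Notation Q1 := (pc 1%N 0).
(* Once p^(0) and p^(1) are known to be constant, p^{n+1} = Q0 + e Q1 + e^2 [p2e e],
   and [p2e e] tends to p^(2). *)
Local Notation p2e e := (fun y => pc 2%N y + e * rp e y).
Local Notation pflux2 i e :=
  (fun y => (pc 2%N y + e * rp e y - pinf (p2e e)) / rho1 e y * pd i (p2e e) y).
Local Notation ell_lhs e x :=
  (- ((1 - e ^+ 2) ^+ 2 / e ^+ 2) * dt ^+ 2 *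
      \sum_(i < d) pd i (fun y => (p1 e y - pinf (p1 e)) / rhohat dt rho m e y
                                   * pd i (p1 e) y) x
    + p1 e x / (gam - 1)).
Local Notation ell_rhs e x :=
  (- ((1 - e ^+ 2) ^+ 2 / (2 * e ^+ 2)) * (dt ^+ 2 / rhohat dt rho m e x)
        * \sum_(i < d) (pd i (p1 e) x) ^+ 2
    - (1 - e ^+ 2) * dt * (p1 e x - pinf (p1 e))
        * \sum_(i < d) pd i (uhat gam dt rho m E i e) x
    + phat gam dt rho m E e x / (gam - 1)).

Lemma gam1_neq0 : gam - 1 != 0.
Proof. by rewrite subr_eq0 gt_eqF. Qed.

Lemma rc0_neq0 x : rc 0%N x != 0.
Proof.
have : c <= rc 0%N x.
  apply: (cvgr_to_ge (cvgC1_cvg (expands_cvgC1 x rho_exp))).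
  by apply: filterS nbhs_right0_le1 => e /(dens_ge e x) [].
by move/(lt_le_trans c_gt0); rewrite lt0r => /andP[].
Qed.

Lemma r1c0_neq0 x : r1c 0%N x != 0.
Proof.
have : c <= r1c 0%N x.
  apply: (cvgr_to_ge (cvgC1_cvg (expands_cvgC1 x rho1_exp))).
  by apply: filterS nbhs_right0_le1 => e /(dens_ge e x) [].
by move/(lt_le_trans c_gt0); rewrite lt0r => /andP[].
Qed.

Lemma mass_limit x : r1c 0%N x = rc 0%N x - dt * \sum_(i < d) pd i (mc i 0%N) x.
Proof.
apply: (cvg_unique_near_eq _ (cvgC1_cvg (expands_cvgC1 x rho1_exp))).
  by apply: filterS nbhs_right0_le1 => e /scheme_eps /(_ x) [-> _].
rewrite /rhohat; apply: cvgB; first exact: cvgC1_cvg (expands_cvgC1 x rho_exp).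
apply: cvgM; first exact: cvg_cst.
by apply: cvg_sum => i; exact: cvgC1_cvg_pd (expands_cvgC1 x (m_exp i)).
Qed.

Lemma pres_cvgC1 x : cvgC1 x (pres_n gam rho m E) (fun _ => P0).
Proof.
have -> : (fun _ => P0) = pnc 0%N by apply/funext => y; rewrite pnc0.
exact: expands_cvgC1 x pres_exp.
Qed.

Lemma vel_cvgC1 j x : cvgC1 x (vel rho m j) (u0 j).
Proof.
exact: cvgC1M (expands_cvgC1 x (m_exp j)) (cvgC1V (rc0_neq0 x) (expands_cvgC1 x rho_exp)).
Qed.

Lemma convect_cvgC1 i j x : cvgC1 x (fun e y => m i e y * vel rho m j e y)
  (fun y => mc i 0%N y * mc j 0%N y / rc 0%N y).
Proof.
apply: (cvgC1_eq (g := fun y => mc i 0%N y * u0 j y)) => [y|]; first exact: mulrA.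
exact: cvgC1M (expands_cvgC1 x (m_exp i)) (vel_cvgC1 j x).
Qed.

Lemma mflux_cvgC1 i j x :
  cvgC1 x (fun e y => m i e y * vel rho m j e y + (if i == j then pres_n gam rho m E e y else 0))
          (fun y => mc i 0%N y * mc j 0%N y / rc 0%N y + (if i == j then P0 else 0)).
Proof.
apply: cvgC1D; first exact: convect_cvgC1.
case: (i == j); first exact: pres_cvgC1.
by apply: cvgC1_cst; exact: differentiable_cst.
Qed.

Lemma mhat_limit i x : mhat gam dt rho m E i e x @[e --> 0^'+] -->
  mc i 0%N x - dt * \sum_(j < d) pd j (fun y => mc i 0%N y * mc j 0%N y / rc 0%N y) x.
Proof.
rewrite /mhat; apply: cvgB; first exact: cvgC1_cvg (expands_cvgC1 x (m_exp i)).
apply: cvgM; first exact: cvg_cst.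
apply: cvg_sum => j; have [_ dconv _ _] := convect_cvgC1 i j x.
by rewrite -(pdDr (if i == j then P0 else 0) _ j x dconv); exact: cvgC1_cvg_pd (mflux_cvgC1 i j x).
Qed.

Lemma scheme_momentum e i x : 0 < e <= 1 ->
  m1 i e x = mhat gam dt rho m E i e x - (1 - e ^+ 2) / e ^+ 2 * dt * pd i (p1 e) x.
Proof. by move=> /scheme_eps /(_ x) [_ [-> _]]. Qed.

Lemma pc_differentiable k x : (k <= 2)%N -> differentiable (pc k) x.
Proof. by move=> /pc_C2b /(_ x) [_ []]. Qed.

Lemma rp_differentiable e x : 0 < e <= 1 -> differentiable (rp e) x.
Proof. by move=> /p1_exp [/(_ x) [_ []]]. Qed.

Lemma p2e_differentiable e x : 0 < e <= 1 -> differentiable (p2e e) x.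
Proof.
by move=> e01; apply: differentiableDMl; [exact: pc_differentiable | exact: rp_differentiable].
Qed.

Lemma p1E e : 0 < e <= 1 -> p1 e = fun y => pc 0%N y + e * pc 1%N y + e ^+ 2 * p2e e y.
Proof. by move=> e01; apply/funext => y; rewrite (p1_exp e e01).2; ring. Qed.

Lemma pd_p1 e i x : 0 < e <= 1 ->
  pd i (p1 e) x = pd i (pc 0%N) x + e * pd i (pc 1%N) x + e ^+ 2 * pd i (p2e e) x.
Proof.
move=> e01; rewrite p1E // !pdDMl //.
all: by [exact: pc_differentiable | exact: rp_differentiable | exact: p2e_differentiable |
         apply: differentiableDMl; exact: pc_differentiable].
Qed.

Lemma p2e_cvgC1 x : cvgC1 x (fun e => p2e e) (pc 2%N).
Proof.
apply: (cvgC1_eq (g := fun y => pc 2%N y + 0)) => [y|]; first exact: addr0.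
apply: cvgC1D; first exact/cvgC1_cst/pc_differentiable.
apply: cvgC1_mul0 cvg_at_right0_id _.
by apply: filterS nbhs_right0_le1 => e /p1_exp [/C2b_boundedC1].
Qed.

Lemma pd_p2e_cvgC1 i x : cvgC1 x (fun e => pd i (p2e e)) (pd i (pc 2%N)).
Proof.
have pd_p2eE : \forall e \near 0^'+, pd i (p2e e) = fun y => pd i (pc 2%N) y + e * pd i (rp e) y.
  apply: filterS nbhs_right0_le1 => e e01; apply/funext => y.
  by rewrite pdDMl //; [exact: pc_differentiable | exact: rp_differentiable].
apply: (cvgC1_near_eq (F := fun e => pd i (p2e e)) pd_p2eE).
apply: (cvgC1_eq (g := fun y => pd i (pc 2%N) y + 0)) => [y|]; first exact: addr0.
apply: cvgC1D.
  by apply: cvgC1_cst; have [] := C2b_boundedC1_pd (x := x) i (pc_C2b 2%N isT).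
apply: cvgC1_mul0 cvg_at_right0_id _.
by apply: filterS nbhs_right0_le1 => e /p1_exp [/C2b_boundedC1_pd].
Qed.

Lemma pd_pc01_eq0 i x : pd i (pc 0%N) x = 0 /\ pd i (pc 1%N) x = 0.
Proof.
have quotE : \forall e \near 0^'+,
    (pd i (pc 0%N) x + e * pd i (pc 1%N) x) / e ^+ 2
    = (mhat gam dt rho m E i e x - m1 i e x) / ((1 - e ^+ 2) * dt) - pd i (p2e e) x.
  apply: filterS nbhs_right0_lt1 => e /andP[e0 e1].
  have e01 : 0 < e <= 1 by rewrite e0 ltW.
  have e2 : 1 - e ^+ 2 != 0 by rewrite subr_eq0 eq_sym expr2; apply/negP => /eqP; nra.
  rewrite scheme_momentum // pd_p1 //; field.
  by rewrite e2 (gt_eqF dt_gt0) (gt_eqF e0).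
have lim : (mhat gam dt rho m E i e x - m1 i e x) / ((1 - e ^+ 2) * dt) - pd i (p2e e) x
    @[e --> 0^'+] -->
    (mc i 0%N x - dt * \sum_(j < d) pd j (fun y => mc i 0%N y * mc j 0%N y / rc 0%N y) x
      - m1c i 0%N x) / (1 * dt) - pd i (pc 2%N) x.
  apply: cvgB; last exact: cvgC1_cvg_pd i (p2e_cvgC1 x).
  apply: cvgM; first exact: cvgB (mhat_limit i x) (cvgC1_cvg (expands_cvgC1 x (m1_exp i))).
  apply: cvgV; first by rewrite mul1r gt_eqF.
  exact: cvgM cvg_at_right0_oneBsqr (cvg_cst dt).
apply: cvg_affine_div_sqr_eq0; apply: cvg_trans lim.
by apply: near_eq_cvg; apply: filterS quotE => e ->.
Qed.

Lemma pc0_const x : pc 0%N x = Q0.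
Proof.
apply: pd0_constant => [y | j y]; [exact: pc_differentiable | exact: (pd_pc01_eq0 j y).1].
Qed.

Lemma pc1_const x : pc 1%N x = Q1.
Proof.
apply: pd0_constant => [y | j y]; [exact: pc_differentiable | exact: (pd_pc01_eq0 j y).2].
Qed.

Lemma p1_affine e : 0 < e <= 1 -> p1 e = fun y => Q0 + e * Q1 + e ^+ 2 * p2e e y.
Proof. by move=> e01; rewrite p1E //; apply/funext => y; rewrite pc0_const pc1_const. Qed.

Lemma pd_p1_sqr e i x : 0 < e <= 1 -> pd i (p1 e) x = e ^+ 2 * pd i (p2e e) x.
Proof. by move=> e01; rewrite pd_p1 // (pd_pc01_eq0 i x).1 (pd_pc01_eq0 i x).2 mulr0 !add0r. Qed.

Lemma p2e_norm_le e y : 0 < e <= 1 -> `|p2e e y| <= Cp + Cr.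
Proof.
move=> /[dup] e01 /andP[e0 e1].
apply: le_trans (ler_normD _ _) _; apply: lerD; first by have [] := pc_C2b 2%N isT y.
have [rb _] := (p1_exp e e01).1 y.
by rewrite normrM gtr0_norm //; apply: le_trans (ler_piMl (normr_ge0 _) e1) rb.
Qed.

Lemma pinf_p1 e : 0 < e <= 1 -> pinf (p1 e) = Q0 + e * Q1 + e ^+ 2 * pinf (p2e e).
Proof.
move=> /[dup] e01 /andP[e0 _]; rewrite p1_affine // pinf_affine ?exprn_gt0 //.
by exists (- (Cp + Cr)) => _ [y _ <-]; move: (p2e_norm_le e y e01); rewrite ler_norml => /andP[].
Qed.

Lemma pinf_p2e_cvg : pinf (p2e e) @[e --> 0^'+] --> pinf (pc 2%N).
Proof.
apply: (pinf_cvg _ _ Cr).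
  by exists (- Cp) => _ [y _ <-]; move: (pc_C2b 2%N isT y) => [+ _]; rewrite ler_norml => /andP[].
apply: filterS nbhs_right0_le1 => e /[dup] e01 /andP[e0 _] y.
have [rb _] := (p1_exp e e01).1 y.
by rewrite addrC addKr normrM gtr0_norm // ler_pM2l.
Qed.

Lemma Ec0_eq x : Ec 0%N x = P0 / (gam - 1).
Proof.
have lim : pres_n gam rho m E e x @[e --> 0^'+] -->
    (gam - 1) * (Ec 0%N x - 0 / 2 * (\sum_(i < d) (mc i 0%N x) ^+ 2) / rc 0%N x).
  apply: cvgM; first exact: cvg_cst.
  apply: cvgB; first exact: cvgC1_cvg (expands_cvgC1 x E_exp).
  apply: cvgM; last exact: cvgV (rc0_neq0 x) (cvgC1_cvg (expands_cvgC1 x rho_exp)).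
  apply: cvgM; first exact: cvgM (cvg_at_right0_exprn 2 isT) (cvg_cst _).
  by apply: cvg_sum => i; exact: cvg_sqr (cvgC1_cvg (expands_cvgC1 x (m_exp i))).
have P0E : P0 = (gam - 1) * (Ec 0%N x - 0 / 2 * (\sum_(i < d) (mc i 0%N x) ^+ 2) / rc 0%N x).
  exact: cvg_unique (cvgC1_cvg (pres_cvgC1 x)) lim.
by rewrite P0E !mul0r subr0; field; rewrite gam1_neq0.
Qed.

Lemma pinf_pres_cvg : pinf (pres_n gam rho m E e) @[e --> 0^'+] --> P0.
Proof.
rewrite -[X in _ --> X](pinf_cst (d := d)); have [K presK] := expands_uniform pres_exp.
apply: (pinf_cvg _ _ K); first by exists P0 => _ [y _ <-].
by apply: filterS nbhs_right0_le1 => e e01 y; rewrite -(pnc0 y); exact: presK.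
Qed.

Lemma Pi_cvgC1 x : cvgC1 x (Pi_n gam rho m E) (fun _ => P0).
Proof.
apply: (cvgC1_eq (g := fun _ => 0 * P0 + 1 * P0)) => [y|]; first by rewrite mul0r mul1r add0r.
apply: cvgC1D; first exact: cvgC1M (cvgC1_scalar (cvg_at_right0_exprn 2 isT)) (pres_cvgC1 x).
by apply: cvgC1_scalar; exact: cvgM cvg_at_right0_oneBsqr pinf_pres_cvg.
Qed.

Lemma eflux_cvgC1 j x :
  cvgC1 x (fun e y => (E e y + Pi_n gam rho m E e y) * vel rho m j e y)
          (fun y => gam * P0 / (gam - 1) * u0 j y).
Proof.
apply: (cvgC1_eq (g := fun y => (Ec 0%N y + P0) * u0 j y)) => [y|].
  by rewrite Ec0_eq; congr (_ * _); field; rewrite gam1_neq0.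
exact: cvgC1M (cvgC1D (expands_cvgC1 x E_exp) (Pi_cvgC1 x)) (vel_cvgC1 j x).
Qed.

Lemma Ehat_limit x : Ehat gam dt rho m E e x @[e --> 0^'+] -->
  P0 / (gam - 1) - dt * (gam * P0 / (gam - 1) * \sum_(j < d) pd j (u0 j) x).
Proof.
rewrite /Ehat -(Ec0_eq x); apply: cvgB; first exact: cvgC1_cvg (expands_cvgC1 x E_exp).
apply: cvgM; first exact: cvg_cst.
rewrite mulr_sumr; apply: cvg_sum => j; have [_ du0 _ _] := vel_cvgC1 j x.
by rewrite -pdMl //; exact: cvgC1_cvg_pd (eflux_cvgC1 j x).
Qed.

Lemma momentum_limit i x : m1c i 0%N x = mc i 0%N x
  - dt * \sum_(j < d) pd j (fun y => mc i 0%N y * mc j 0%N y / rc 0%N y) x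
  - dt * pd i (pc 2%N) x.
Proof.
have m1E : \forall e \near 0^'+,
    m1 i e x = mhat gam dt rho m E i e x - (1 - e ^+ 2) * dt * pd i (p2e e) x.
  apply: filterS nbhs_right0_le1 => e /[dup] e01 /andP[e0 _].
  by rewrite scheme_momentum // pd_p1_sqr //; field; rewrite gt_eqF.
have lim : mhat gam dt rho m E i e x - (1 - e ^+ 2) * dt * pd i (p2e e) x @[e --> 0^'+] -->
    mc i 0%N x - dt * \sum_(j < d) pd j (fun y => mc i 0%N y * mc j 0%N y / rc 0%N y) x
    - 1 * dt * pd i (pc 2%N) x.
  apply: cvgB; first exact: mhat_limit.
  apply: cvgM; first exact: cvgM cvg_at_right0_oneBsqr (cvg_cst dt).
  exact: cvgC1_cvg_pd i (p2e_cvgC1 x).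
by rewrite (cvg_unique_near_eq m1E (cvgC1_cvg (expands_cvgC1 x (m1_exp i))) lim) mul1r.
Qed.

Lemma uhatE e i : 0 < e <= 1 -> uhat gam dt rho m E i e =
  fun y => (m1 i e y + (1 - e ^+ 2) * dt * pd i (p2e e) y) / rho1 e y.
Proof.
move=> /[dup] e01 /andP[e0 _]; apply/funext => y.
have [rho1E _] := scheme_eps e e01 y.
by rewrite /uhat -rho1E scheme_momentum // pd_p1_sqr //; congr (_ / _); field; rewrite gt_eqF.
Qed.

Lemma uhat_cvgC1 i x : cvgC1 x (uhat gam dt rho m E i)
  (fun y => (m1c i 0%N y + 1 * dt * pd i (pc 2%N) y) / r1c 0%N y).
Proof.
have uhatE_near : \forall e \near 0^'+, uhat gam dt rho m E i e =
    fun y => (m1 i e y + (1 - e ^+ 2) * dt * pd i (p2e e) y) / rho1 e y.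
  by apply: filterS nbhs_right0_le1 => e; exact: uhatE.
apply: (cvgC1_near_eq uhatE_near).
apply: cvgC1M; last exact: cvgC1V (r1c0_neq0 x) (expands_cvgC1 x rho1_exp).
apply: cvgC1D; first exact: expands_cvgC1 x (m1_exp i).
apply: cvgC1M (pd_p2e_cvgC1 i x).
by apply: cvgC1_scalar; exact: cvgM cvg_at_right0_oneBsqr (cvg_cst dt).
Qed.

Lemma pflux_eq e i : 0 < e <= 1 ->
  (fun y => (p1 e y - pinf (p1 e)) / rhohat dt rho m e y * pd i (p1 e) y) =
  fun y => e ^+ 4 * pflux2 i e y.
Proof.
move=> e01; apply/funext => y; have [rho1E _] := scheme_eps e e01 y.
by rewrite -rho1E pinf_p1 // pd_p1_sqr // p1_affine //; ring.
Qed.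

Lemma pflux2_cvgC1 i x : cvgC1 x (fun e => pflux2 i e)
  (fun y => (pc 2%N y - pinf (pc 2%N)) / r1c 0%N y * pd i (pc 2%N) y).
Proof.
apply: cvgC1M (pd_p2e_cvgC1 i x).
apply: cvgC1M; last exact: cvgC1V (r1c0_neq0 x) (expands_cvgC1 x rho1_exp).
apply: cvgC1D; first exact: p2e_cvgC1.
by apply: cvgC1_scalar; exact: cvgN pinf_p2e_cvg.
Qed.

Lemma p1_expands : expands p1 pc.
Proof. by split; [exists Cp | exists rp, Cr]. Qed.

Lemma ell_lhs_limit x : ell_lhs e x @[e --> 0^'+] --> Q0 / (gam - 1).
Proof.
have dflux : \forall e \near 0^'+, forall i, differentiable (pflux2 i e) x.
  by apply: filter_forall => i; have [] := pflux2_cvgC1 i x.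
have lhsE : \forall e \near 0^'+, ell_lhs e x = p1 e x / (gam - 1)
    + e ^+ 2 * (- (1 - e ^+ 2) ^+ 2 * dt ^+ 2 * \sum_(i < d) pd i (pflux2 i e) x).
  apply: filterS2 nbhs_right0_le1 dflux => e /[dup] e01 /andP[e0 _] dfluxe.
  have -> : \sum_(i < d) pd i (fun y => (p1 e y - pinf (p1 e)) / rhohat dt rho m e y
      * pd i (p1 e) y) x = e ^+ 4 * \sum_(i < d) pd i (pflux2 i e) x.
    by rewrite mulr_sumr; apply: eq_bigr => i _; rewrite pflux_eq // pdMl.
  by field; rewrite gam1_neq0 gt_eqF.
have lim : p1 e x / (gam - 1)
    + e ^+ 2 * (- (1 - e ^+ 2) ^+ 2 * dt ^+ 2 * \sum_(i < d) pd i (pflux2 i e) x)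
    @[e --> 0^'+] --> Q0 / (gam - 1).
  apply: cvgD_sqrM.
    by rewrite -(pc0_const x); exact: cvgM (cvgC1_cvg (expands_cvgC1 x p1_expands)) (cvg_cst _).
  apply: cvgP; apply: cvgM; first exact: cvgM (cvgN (cvg_sqr cvg_at_right0_oneBsqr)) (cvg_cst _).
  by apply: cvg_sum => i; exact: cvgC1_cvg_pd i (pflux2_cvgC1 i x).
by apply: cvg_trans lim; apply: near_eq_cvg; apply: filterS lhsE => e ->.
Qed.

Lemma ell_rhs_limit x : ell_rhs e x @[e --> 0^'+] -->
  P0 / (gam - 1) - dt * (gam * P0 / (gam - 1) * \sum_(j < d) pd j (u0 j) x).
Proof.
pose Z e := - (1 - e ^+ 2) ^+ 2 * dt ^+ 2 / (2 * rho1 e x) * \sum_(i < d) (pd i (p2e e) x) ^+ 2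
  - (1 - e ^+ 2) * dt * (p2e e x - pinf (p2e e)) * \sum_(i < d) pd i (uhat gam dt rho m E i e) x
  - rho1 e x / 2 * \sum_(i < d) (uhat gam dt rho m E i e x) ^+ 2.
have rhsE : \forall e \near 0^'+, ell_rhs e x = Ehat gam dt rho m E e x + e ^+ 2 * Z e.
  apply: filterS nbhs_right0_le1 => e /[dup] e01 /andP[e0 _].
  have [rho1E _] := scheme_eps e e01 x.
  have rho1_neq0 : rho1 e x != 0.
    by rewrite gt_eqF //; apply: lt_le_trans c_gt0 (dens_ge e x e01).2.
  have -> : \sum_(i < d) (pd i (p1 e) x) ^+ 2 = e ^+ 4 * \sum_(i < d) (pd i (p2e e) x) ^+ 2.
    by rewrite mulr_sumr; apply: eq_bigr => i _; rewrite pd_p1_sqr // exprMn -exprM.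
  have -> : p1 e x - pinf (p1 e) = e ^+ 2 * (p2e e x - pinf (p2e e)).
    by rewrite pinf_p1 // p1_affine //; ring.
  by rewrite /phat /Z -rho1E; field; rewrite gam1_neq0 rho1_neq0 gt_eqF.
apply: cvg_trans (cvgD_sqrM (Ehat_limit x) _).
  by apply: near_eq_cvg; apply: filterS rhsE => e ->.
have rho1_lim := cvgC1_cvg (expands_cvgC1 x rho1_exp).
apply: cvgP; apply: cvgB; first apply: cvgB.
- apply: cvgM; last by apply: cvg_sum => i; exact: cvg_sqr (cvgC1_cvg_pd i (p2e_cvgC1 x)).
  apply: cvgM; first exact: cvgM (cvgN (cvg_sqr cvg_at_right0_oneBsqr)) (cvg_cst _).
  apply: cvgV; last exact: cvgM (cvg_cst (2 : R)) rho1_lim.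
  by rewrite mulf_neq0 ?r1c0_neq0 ?pnatr_eq0.
- apply: cvgM; last by apply: cvg_sum => i; exact: cvgC1_cvg_pd i (uhat_cvgC1 i x).
  apply: cvgM; first exact: cvgM cvg_at_right0_oneBsqr (cvg_cst dt).
  exact: cvgB (cvgC1_cvg (p2e_cvgC1 x)) pinf_p2e_cvg.
- apply: cvgM; first exact: cvgM rho1_lim (cvg_cst _).
  by apply: cvg_sum => i; exact: cvg_sqr (cvgC1_cvg (uhat_cvgC1 i x)).
Qed.

Lemma pressure_limit x : gam * P0 * \sum_(i < d) pd i (u0 i) x = - (pc 0%N x - P0) / dt.
Proof.
have ell_eq : \forall e \near 0^'+, ell_lhs e x = ell_rhs e x.
  by apply: filterS nbhs_right0_le1 => e e01; have [_ [_ ->]] := scheme_eps e e01 x.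
have := cvg_unique_near_eq ell_eq (ell_lhs_limit x) (ell_rhs_limit x).
rewrite (pc0_const x) => Q0E.
have -> : Q0 = P0 - dt * (gam * P0 * \sum_(i < d) pd i (u0 i) x).
  transitivity ((gam - 1) * (Q0 / (gam - 1))); first by field; rewrite gam1_neq0.
  by rewrite Q0E; field; rewrite gam1_neq0.
by field; rewrite gt_eqF.
Qed.

Lemma incompressible_limit :
  (exists Q0 Q1 : R, forall x, pc 0%N x = Q0 /\ pc 1%N x = Q1) /\
  forall x,
    r1c 0%N x = rc 0%N x - dt * \sum_(i < d) pd i (mc i 0%N) x /\
    (forall i, m1c i 0%N x = mc i 0%N x
        - dt * \sum_(j < d) pd j (fun y => mc i 0%N y * mc j 0%N y / rc 0%N y) x
        - dt * pd i (pc 2%N) x) /\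
    gam * P0 * \sum_(i < d) pd i (fun y => mc i 0%N y / rc 0%N y) x
      = - (pc 0%N x - P0) / dt.
Proof.
split; first by exists Q0, Q1 => x; rewrite pc0_const pc1_const.
move=> x; split; first exact: mass_limit.
by split; [move=> i; exact: momentum_limit | exact: pressure_limit].
Qed.

End IncompressibleLimit.

Theorem theorem3p5 (R : realType) (d : nat) (gam dt : R)
  (rho : R -> 'rV[R]_d -> R) (m : 'I_d -> R -> 'rV[R]_d -> R) (E : R -> 'rV[R]_d -> R)
  (rho1 : R -> 'rV[R]_d -> R) (m1 : 'I_d -> R -> 'rV[R]_d -> R) (p1 : R -> 'rV[R]_d -> R)
  (rc : nat -> 'rV[R]_d -> R) (mc : 'I_d -> nat -> 'rV[R]_d -> R)
  (Ec pnc : nat -> 'rV[R]_d -> R)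
  (r1c : nat -> 'rV[R]_d -> R) (m1c : 'I_d -> nat -> 'rV[R]_d -> R)
  (pc : nat -> 'rV[R]_d -> R) (P0 : R) :
  1 < gam -> 0 < dt ->
  (* positive densities, uniformly bounded away from 0 *)
  (exists c : R, 0 < c /\ forall e x, 0 < e <= 1 -> c <= rho e x /\ c <= rho1 e x) ->
  (* the scheme holds for every Mach number eps in (0,1] *)
  (forall e, 0 < e <= 1 -> scheme gam dt rho m E rho1 m1 p1 e) ->
  (* asymptotic expansions of all variables *)
  expands rho rc -> (forall i, expands (m i) (mc i)) -> expands E Ec ->
  expands (pres_n gam rho m E) pnc ->
  expands rho1 r1c -> (forall i, expands (m1 i) (m1c i)) -> expands p1 pc ->
  (* well-prepared data at time level n: p^{(0),n} spatially constant *)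
  (forall x, pnc 0%N x = P0) ->
  (* leading order = time discretisation of the incompressible Euler system *)
  (exists Q0 Q1 : R, forall x, pc 0%N x = Q0 /\ pc 1%N x = Q1) /\
  forall x,
    r1c 0%N x = rc 0%N x - dt * \sum_(i < d) pd i (mc i 0%N) x /\
    (forall i, m1c i 0%N x = mc i 0%N x
        - dt * \sum_(j < d) pd j (fun y => mc i 0%N y * mc j 0%N y / rc 0%N y) x
        - dt * pd i (pc 2%N) x) /\
    gam * P0 * \sum_(i < d) pd i (fun y => mc i 0%N y / rc 0%N y) x
      = - (pc 0%N x - P0) / dt.
Proof.
move=> gam_gt1 dt_gt0 [c [c_gt0 dens_ge]] scheme_eps rho_exp m_exp E_exp pres_exp
  rho1_exp m1_exp [[Cp pc_C2b] [rp [Cr p1_exp]]] pnc0.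
exact: (incompressible_limit gam_gt1 dt_gt0 c_gt0 dens_ge scheme_eps rho_exp m_exp E_exp
  pres_exp rho1_exp m1_exp pc_C2b p1_exp pnc0).
Qed.
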